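(* Consider the objective $$\Phi(w,u)=\frac1n\sum_{i=1}^n\Big[-L\big(y_i,f(w,u)(x^i)\big)+\sum_{r=1}^K f_r(w,u)(x^i)\Big]+\epsilon\Big(\sum_{r,l}w_{r,l}+\sum_{l,m}u_{lm}\Big),\quad\epsilon>0,$$ for a family of functions $f_r(w,u)(x)$, $r\in[K]$, that are twice continuously differentiable in $(w,u)$ on a neighbourhood of $B_{++}$ and whose first and second partial derivatives in the entries of $(w,u)$ are nonnegative there. Suppose there exist constants $C_w,C_u,M_{w,w},M_{w,u},M_{u,w},M_{u,u}>0$ such that for every $x\in\{x^1,\dots,x^n\}$, every $(w,u)\in B_{++}$, all $r,s\in[K]$, $t,b'\in[n_1]$ (indices for $w$) and $a\in[n_1]$, $b\in[d]$, $a'\in[n_1]$, $b''\in[d]$ (indices for $u$): $$\sum_{t}w_{s,t}\frac{\partial f_r(x)}{\partial w_{s,t}}\le C_w,\qquad \sum_{a,b}u_{ab}\frac{\partial f_r(x)}{\partial u_{ab}}\le C_u,$$ $$\sum_t w_{s,t}\frac{\partial^2 f_r(x)}{\partial w_{s,t}\partial w_{q,b'}}\le M_{w,w}\frac{\partial f_r(x)}{\partial w_{q,b'}},\qquad \sum_{a,b}u_{ab}\frac{\partial^2 f_r(x)}{\partial u_{ab}\partial w_{q,b'}}\le M_{w,u}\frac{\partial f_r(x)}{\partial w_{q,b'}},$$ $$\sum_t w_{s,t}\frac{\partial^2 f_r(x)}{\partial w_{s,t}\partial u_{a'b''}}\le M_{u,w}\frac{\partial f_r(x)}{\partial u_{a'b''}},\qquad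 \sum_{a,b}u_{ab}\frac{\partial^2 f_r(x)}{\partial u_{ab}\partial u_{a'b''}}\le M_{u,u}\frac{\partial f_r(x)}{\partial u_{a'b''}}$$ (for all $q\in[K]$). Then $F=G^\Phi$ is well defined on $B_{++}$ and $F$ and the matrix $$A=2\,\mathrm{diag}(p_w'-1,\dots,p_w'-1,p_u'-1)\begin{pmatrix}(2C_w+M_{w,w})\mathbf{1}\mathbf{1}^T & (2C_u+M_{w,u})\mathbf{1}\\ (2C_w+M_{u,w})\mathbf{1}^T & 2C_u+M_{u,u}\end{pmatrix}\in\mathbb{R}^{(K+1)\times(K+1)}$$ (with $\mathbf{1}\in\mathbb{R}^K$ the all-ones vector) satisfy, for all $i,k\in[K]$, $j,a\in[n_1]$, $b\in[d]$, $(w,u)\in B_{++}$: $$\langle|\nabla_{w_k}F_{w_{i,j}}|,w_k\rangle\le A_{i,k}F_{w_{i,j}},\ \langle|\nabla_u F_{w_{i,j}}|,u\rangle\le A_{i,K+1}F_{w_{i,j}},\ \langle|\nabla_{w_k}F_{u_{ab}}|,w_k\rangle\le A_{K+1,k}F_{u_{ab}},\ \langle|\nabla_u F_{u_{ab}}|,u\rangle\le A_{K+1,K+1}F_{u_{ab}}.$$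
   Context: Data $(x^i,y_i)\in\mathbb{R}^d_+\times[K]$, $i\in[n]$. $w\in\mathbb{R}^{K\times n_1}$ with rows $w_1,\dots,w_K$, $u\in\mathbb{R}^{n_1\times d}$. Loss $L(y,f(x))=-f_y(x)+\log\sum_{j=1}^K e^{f_j(x)}$. $V_{++}=\mathbb{R}^{K\times n_1}_{++}\times\mathbb{R}^{n_1\times d}_{++}$; given $p_w,p_u\in(1,\infty)$, $\rho_w,\rho_u>0$, $B_{++}=\{(w,u)\in V_{++}:\|u\|_{p_u}\le\rho_u,\ \|w_i\|_{p_w}\le\rho_w\ \forall i\}$ (entrywise norms). For $p\in(1,\infty)$, $p'=p/(p-1)$, $\psi_p(z)=\operatorname{sign}(z)|z|^{p-1}$ componentwise; $$G^{\Phi}(w,u)=\Big(\tfrac{\rho_w\psi_{p_w'}(\nabla_{w_1}\Phi)}{\|\psi_{p_w'}(\nabla_{w_1}\Phi)\|_{p_w}},\dots,\tfrac{\rho_w\psi_{p_w'}(\nabla_{w_K}\Phi)}{\|\psi_{p_w'}(\nabla_{w_K}\Phi)\|_{p_w}},\tfrac{\rho_u\psi_{p_u'}(\nabla_u\Phi)}{\|\psi_{p_u'}(\nabla_u\Phi)\|_{p_u}}\Big)(w,u),$$ whose components are denoted $F_{w_{i,j}}$, $F_{u_{ab}}$. $|\cdot|$ is the entrywise absolute value, $\langle\cdot,\cdot\rangle$ the Frobenius inner product, all quantities evaluated at $(w,u)$. *)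

From Stdlib Require Import Reals ClassicalEpsilon.
From mathcomp Require Import all_boot.
Set Implicit Arguments.
Unset Strict Implicit.
Unset Printing Implicit Defensive.
Local Open Scope R_scope.

(* A coordinate is either w_{i,j} (i < K, j < n1) or u_{a,b} (a < n1, b < d).
   Indices are 0-based: [K] = {0,...,K-1}. *)
Definition coord (K n1 d : nat) : Type := (('I_K * 'I_n1) + ('I_n1 * 'I_d))%type.
Definition CW {K n1 d : nat} (i : 'I_K) (j : 'I_n1) : coord K n1 d := inl (i, j).
Definition CU {K n1 d : nat} (a : 'I_n1) (b : 'I_d) : coord K n1 d := inr (a, b).

Definition param (K n1 d : nat) : Type := coord K n1 d -> R.

Definition shift {K n1 d : nat} (p : param K n1 d) (c : coord K n1 d) (h : R)
  : param K n1 d := fun c' => if c' == c then p c' + h else p c'.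

Definition has_pd {K n1 d : nat} (g : param K n1 d -> R) (c : coord K n1 d)
  (p : param K n1 d) : Prop :=
  exists l, derivable_pt_lim (fun h => g (shift p c h)) 0 l.

(* the partial derivative dg/dc at p (meaningful when has_pd g c p) *)
Definition pd {K n1 d : nat} (g : param K n1 d -> R) (c : coord K n1 d)
  (p : param K n1 d) : R :=
  epsilon (inhabits 0) (fun l => derivable_pt_lim (fun h => g (shift p c h)) 0 l).

Definition near {K n1 d : nat} (p q : param K n1 d) (delta : R) : Prop :=
  forall c, Rabs (q c - p c) < delta.

Definition is_open {K n1 d : nat} (U : param K n1 d -> Prop) : Prop :=
  forall p, U p -> exists delta, 0 < delta /\ forall q, near p q delta -> U q.

Definition cont_at {K n1 d : nat} (g : param K n1 d -> R) (p : param K n1 d) : Prop :=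
  forall e, 0 < e -> exists delta, 0 < delta /\
    forall q, near p q delta -> Rabs (g q - g p) < e.

Definition C2_on {K n1 d : nat} (U : param K n1 d -> Prop) (g : param K n1 d -> R) : Prop :=
  forall p, U p ->
    cont_at g p /\
    (forall c, has_pd g c p /\ cont_at (pd g c) p) /\
    (forall c1 c2, has_pd (pd g c1) c2 p /\ cont_at (pd (pd g c1) c2) p).

(* x^y for x >= 0 (with 0^y = 0, used only for y > 0) *)
Definition rpow (x y : R) : R := if Rlt_dec 0 x then Rpower x y else 0.

Definition sgn (z : R) : R :=
  if Rlt_dec 0 z then 1 else if Rlt_dec z 0 then -1 else 0.

Definition conj_exp (p : R) : R := p / (p - 1).

Definition psi (p z : R) : R := sgn z * rpow (Rabs z) (p - 1).

Definition norm_row {K n1 d : nat} (pp : R) (v : param K n1 d) (i : 'I_K) : R :=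
  rpow (\big[Rplus/0]_(j < n1) rpow (Rabs (v (CW i j))) pp) (/ pp).
Definition norm_u {K n1 d : nat} (pp : R) (v : param K n1 d) : R :=
  rpow (\big[Rplus/0]_(a < n1) \big[Rplus/0]_(b < d) rpow (Rabs (v (CU a b))) pp) (/ pp).

Definition Vpp {K n1 d : nat} (p : param K n1 d) : Prop := forall c, 0 < p c.
Definition Bpp {K n1 d : nat} (pw pu rw ru : R) (p : param K n1 d) : Prop :=
  Vpp p /\ norm_u pu p <= ru /\ (forall i : 'I_K, norm_row pw p i <= rw).

Definition CEloss {K : nat} (y : 'I_K) (v : 'I_K -> R) : R :=
  - v y + ln (\big[Rplus/0]_(j < K) exp (v j)).

Definition Phi {K n1 d n : nat} (f : 'I_K -> ('I_d -> R) -> param K n1 d -> R)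
  (x : 'I_n -> 'I_d -> R) (y : 'I_n -> 'I_K) (eps : R) (p : param K n1 d) : R :=
  / INR n * \big[Rplus/0]_(i < n)
      (- CEloss (y i) (fun r => f r (x i) p) + \big[Rplus/0]_(r < K) f r (x i) p)
  + eps * (\big[Rplus/0]_(r < K) \big[Rplus/0]_(l < n1) p (CW r l)
           + \big[Rplus/0]_(l < n1) \big[Rplus/0]_(m < d) p (CU l m)).

Definition psi_grad {K n1 d : nat} (Ph : param K n1 d -> R) (pp : R) (p : param K n1 d)
  : param K n1 d := fun c => psi (conj_exp pp) (pd Ph c p).

Definition GPhi {K n1 d : nat} (Ph : param K n1 d -> R) (pw pu rw ru : R)
  (c : coord K n1 d) (p : param K n1 d) : R :=
  match c with
  | inl (i, j) => rw * psi (conj_exp pw) (pd Ph (CW i j) p)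
                    / norm_row pw (psi_grad Ph pw p) i
  | inr (a, b) => ru * psi (conj_exp pu) (pd Ph (CU a b) p)
                    / norm_u pu (psi_grad Ph pu p)
  end.

(* the (K+1)x(K+1) matrix A, 0-based indices 0..K; index K is the last
   row/column (K+1 in the paper).
   A = 2 diag(pw'-1,...,pw'-1,pu'-1) * Blk. *)
Definition Ablk (K : nat) (Cw Cu Mww Mwu Muw Muu : R) (i k : nat) : R :=
  if (i < K)%N then (if (k < K)%N then 2 * Cw + Mww else 2 * Cu + Mwu)
  else (if (k < K)%N then 2 * Cw + Muw else 2 * Cu + Muu).
Definition Adiag (K : nat) (pw pu : R) (i : nat) : R :=
  if (i < K)%N then conj_exp pw - 1 else conj_exp pu - 1.
Definition Amat (K : nat) (pw pu Cw Cu Mww Mwu Muw Muu : R) (i k : nat) : R :=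
  2 * (Adiag K pw pu i * Ablk K Cw Cu Mww Mwu Muw Muu i k).

Definition ip_w {K n1 d : nat} (g : param K n1 d -> R) (k : 'I_K) (p : param K n1 d) : R :=
  \big[Rplus/0]_(t < n1) (Rabs (pd g (CW k t) p) * p (CW k t)).
Definition ip_u {K n1 d : nat} (g : param K n1 d -> R) (p : param K n1 d) : R :=
  \big[Rplus/0]_(a < n1) \big[Rplus/0]_(b < d) (Rabs (pd g (CU a b) p) * p (CU a b)).

From Stdlib Require Import Reals Lra ClassicalEpsilon FunctionalExtensionality.
From HB Require Import structures.
From mathcomp Require Import all_boot.
Local Open Scope R_scope.

(* On B_{++} every partial derivative of Phi is at least eps > 0, so each block of G^Phi
   is the duality map g |-> r psi_{p'}(g) / ||psi_{p'}(g)||_p of a positive vector g of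
   gradient entries.  Its logarithmic derivative is
     (p' - 1) (dg_{i0} / g_{i0} - sum_i g_i^{p'-1} dg_i / sum_i g_i^{p'}),
   so weighting by the coordinates reduces the claim to  sum_t w_t |d_t g_i| <= (2C + M) g_i
   for the Hessian of Phi, which gives the factor 2 (p' - 1)(2C + M).  For one sample the
   Hessian of the cross-entropy splits into a nonnegative combination of second derivatives
   of the logits, controlled by M, and a softmax covariance term, controlled by 2C; both are
   dominated by the gradient entry, which is nonnegative since a softmax average of the
   first derivatives is at most their sum. *)

Lemma RplusA : associative Rplus. Proof. by move=> *; ring. Qed.
Lemma RplusC : commutative Rplus. Proof. by move=> *; ring. Qed.
Lemma Rplus0l : left_id 0 Rplus. Proof. by move=> *; ring. Qed.
HB.instance Definition _ := Monoid.isComLaw.Build R 0 Rplus RplusA RplusC Rplus0l.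

Section RealSums.
Variables (I : Type) (r : seq I) (P : pred I).

Lemma sumR_le (F G : I -> R) : (forall i, P i -> F i <= G i) ->
  \big[Rplus/0]_(i <- r | P i) F i <= \big[Rplus/0]_(i <- r | P i) G i.
Proof. by move=> H; apply: (big_ind2 (fun a b => a <= b)) => //; [lra | move=> *; lra]. Qed.

Lemma sumR_ge0 (F : I -> R) : (forall i, P i -> 0 <= F i) ->
  0 <= \big[Rplus/0]_(i <- r | P i) F i.
Proof. by move=> H; apply: (big_ind (fun a => 0 <= a)) => //; [lra | move=> *; lra]. Qed.

Lemma sumR_mull (F : I -> R) c :
  \big[Rplus/0]_(i <- r | P i) (c * F i) = c * \big[Rplus/0]_(i <- r | P i) F i.
Proof.
apply: (big_rec2 (fun a b => a = c * b)); first ring.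
by move=> i y1 y2 _ ->; ring.
Qed.

Lemma sumR_mulr (F : I -> R) c :
  \big[Rplus/0]_(i <- r | P i) (F i * c) = (\big[Rplus/0]_(i <- r | P i) F i) * c.
Proof. by rewrite Rmult_comm -sumR_mull; apply: eq_bigr => i _; ring. Qed.

Lemma sumR_minus (F G : I -> R) :
  \big[Rplus/0]_(i <- r | P i) (F i - G i) =
  \big[Rplus/0]_(i <- r | P i) F i - \big[Rplus/0]_(i <- r | P i) G i.
Proof.
rewrite /Rminus big_split /=; congr (_ + _).
apply: (big_rec2 (fun a b => a = - b)); first ring.
by move=> i y1 y2 _ ->; ring.
Qed.

Lemma sumR_abs (F : I -> R) :
  Rabs (\big[Rplus/0]_(i <- r | P i) F i) <= \big[Rplus/0]_(i <- r | P i) Rabs (F i).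
Proof.
apply: (big_rec2 (fun a b => Rabs a <= b)); first by rewrite Rabs_R0; lra.
by move=> i y1 y2 _ H; apply: Rle_trans (Rabs_triang _ _) _; lra.
Qed.

End RealSums.

Lemma sumR_ge_term {I : finType} (F : I -> R) (j : I) :
  (forall i, 0 <= F i) -> F j <= \big[Rplus/0]_(i : I) F i.
Proof.
move=> H; rewrite (bigD1 j) //=.
have : 0 <= \big[Rplus/0]_(i | i != j) F i by apply: sumR_ge0.
lra.
Qed.

Lemma sumR_gt0 {I : finType} (j : I) (F : I -> R) :
  (forall i, 0 < F i) -> 0 < \big[Rplus/0]_(i : I) F i.
Proof.
move=> H; apply: Rlt_le_trans (H j) _.
by apply: sumR_ge_term => i; apply: Rlt_le.
Qed.

Lemma derivable_pt_lim_value f x l l' :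
  l = l' -> derivable_pt_lim f x l -> derivable_pt_lim f x l'.
Proof. by move=> ->. Qed.

Lemma derivable_pt_lim_scale a f x l : derivable_pt_lim f x l ->
  derivable_pt_lim (fun h => a * f h) x (a * l).
Proof. exact: derivable_pt_lim_scal. Qed.

Lemma derivable_pt_lim_exp_comp f x l : derivable_pt_lim f x l ->
  derivable_pt_lim (fun h => exp (f h)) x (exp (f x) * l).
Proof. by move=> H; apply: (derivable_pt_lim_comp f exp) H (derivable_pt_lim_exp _). Qed.

Lemma derivable_pt_lim_ln_comp f x l : derivable_pt_lim f x l -> 0 < f x ->
  derivable_pt_lim (fun h => ln (f h)) x (/ f x * l).
Proof. by move=> H P; apply: (derivable_pt_lim_comp f ln) H (derivable_pt_lim_ln _ P). Qed.

Lemma derivable_pt_lim_Rpower_comp f x l a : derivable_pt_lim f x l -> 0 < f x ->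
  derivable_pt_lim (fun h => Rpower (f h) a) x (a * Rpower (f x) (a - 1) * l).
Proof.
by move=> H P; apply: (derivable_pt_lim_comp f (Rpower^~ a)) H (derivable_pt_lim_power _ _ P).
Qed.

Lemma derivable_pt_lim_sum (I : Type) (r : seq I) (P : pred I) (F : I -> R -> R)
    (l : I -> R) x :
  (forall i, P i -> derivable_pt_lim (F i) x (l i)) ->
  derivable_pt_lim (fun h => \big[Rplus/0]_(i <- r | P i) F i h) x
                   (\big[Rplus/0]_(i <- r | P i) l i).
Proof.
move=> H; elim: r => [|a r IH].
  rewrite big_nil; apply: (derivable_pt_lim_ext (fun _ => 0)); last first.
    exact: derivable_pt_lim_const.
  by move=> h; rewrite big_nil.
rewrite big_cons; case Pa: (P a).
  apply: (derivable_pt_lim_ext (fun h => F a h + \big[Rplus/0]_(i <- r | P i) F i h)).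
    by move=> h; rewrite big_cons Pa.
  exact: derivable_pt_lim_plus (H a Pa) IH.
by apply: derivable_pt_lim_ext IH => h; rewrite big_cons Pa.
Qed.

Section PartialDerivatives.
Context {K n1 d : nat}.
Implicit Types (g : param K n1 d -> R) (p : param K n1 d) (c : coord K n1 d).

Lemma pd_spec g c p :
  has_pd g c p -> derivable_pt_lim (fun h => g (shift p c h)) 0 (pd g c p).
Proof. exact: epsilon_spec. Qed.

Lemma pd_unique {g c p l} :
  derivable_pt_lim (fun h => g (shift p c h)) 0 l -> pd g c p = l.
Proof.
by move=> H; apply: (uniqueness_limite _ 0 _ _ _ H); apply: pd_spec; exists l.
Qed.

Lemma shift0 p c : shift p c 0 = p.
Proof. by apply: functional_extensionality => c0; rewrite /shift; case: (c0 == c) => //; ring. Qed.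

Lemma derivable_pt_lim_shift p c c0 :
  derivable_pt_lim (fun h => shift p c h c0) 0 (if c0 == c then 1 else 0).
Proof.
rewrite /shift; case: (c0 == c); last exact: derivable_pt_lim_const.
apply: (derivable_pt_lim_value _ _ (0 + 1)); first ring.
exact: derivable_pt_lim_plus (derivable_pt_lim_const _ _) (derivable_pt_lim_id _).
Qed.

Lemma is_open_shift {U : param K n1 d -> Prop} {p} : is_open U -> U p ->
  exists del, 0 < del /\ forall c h, Rabs h < del -> U (shift p c h).
Proof.
move=> HU Up; case: (HU p Up) => del [Hdel Hnear]; exists del; split => // c h hh.
apply: Hnear => c0; rewrite /shift; case: (c0 == c).
  by have -> : p c0 + h - p c0 = h by ring.
by rewrite Rminus_diag Rabs_R0.
Qed.

Lemma pd_local {U : param K n1 d -> Prop} {g1 g2 p c l} : is_open U -> U p ->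
  (forall q, U q -> g1 q = g2 q) ->
  derivable_pt_lim (fun h => g1 (shift p c h)) 0 l ->
  derivable_pt_lim (fun h => g2 (shift p c h)) 0 l.
Proof.
move=> HU Up E; case: (is_open_shift HU Up) => del [Hdel Hl].
apply: (derivable_pt_lim_locally_ext _ _ _ (- del) del); first lra.
by move=> h hh; apply: E; apply: Hl; apply: Rabs_def1; lra.
Qed.

End PartialDerivatives.

Lemma weighted_avg_le_sum {K} {e dd : 'I_K -> R} : (0 < K)%N ->
  (forall j, 0 < e j) -> (forall j, 0 <= dd j) ->
  (\big[Rplus/0]_(j < K) (e j * dd j)) / (\big[Rplus/0]_(j < K) e j)
    <= \big[Rplus/0]_(j < K) dd j.
Proof.
move=> HK He Hd; set E := \big[Rplus/0]_(j < K) e j.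
have HE : 0 < E by apply: (sumR_gt0 (Ordinal HK)).
apply: (Rmult_le_reg_r E) => //; rewrite /Rdiv Rmult_assoc Rinv_l; last lra.
rewrite Rmult_1_r Rmult_comm -sumR_mull; apply: sumR_le => j _.
by apply: Rmult_le_compat_r => //; apply: sumR_ge_term => i; apply: Rlt_le.
Qed.

(* One sample of the cross-entropy Hessian, with softmax weights [e j / E]: [dd j] and
   [a j t] are first derivatives of the [j]-th logit, [D j t] its mixed second derivatives,
   and the weights [w t] are the coordinates of the point in the directions [t]. *)
Section SoftmaxHessian.
Variables (K : nat) (J : finType) (w : J -> R) (e dd : 'I_K -> R) (a D : 'I_K -> J -> R).
Variables (yy : 'I_K) (C M : R).
Hypotheses (HK : (0 < K)%N) (Hw : forall t, 0 <= w t) (He : forall j, 0 < e j).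
Hypotheses (Hdd : forall j, 0 <= dd j) (Ha : forall j t, 0 <= a j t).
Hypothesis HD : forall j t, 0 <= D j t.
Hypotheses (HC : forall j, \big[Rplus/0]_(t : J) (w t * a j t) <= C).
Hypotheses (HM : forall j, \big[Rplus/0]_(t : J) (w t * D j t) <= M * dd j).
Hypothesis C0 : 0 <= C.

Local Notation E := (\big[Rplus/0]_(j < K) e j).
Local Notation Sd := (\big[Rplus/0]_(j < K) (e j * dd j)).

Let E_gt0 : 0 < E. Proof. exact: (sumR_gt0 (Ordinal HK)). Qed.

Let softmax_compl_ge0 j : 0 <= 1 - e j / E.
Proof.
have : e j <= E by apply: sumR_ge_term => i; apply: Rlt_le.
move=> H; suff : e j / E <= 1 by lra.
apply: (Rmult_le_reg_r E _ _ E_gt0).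
by rewrite /Rdiv Rmult_assoc Rinv_l; lra.
Qed.

Let sum_softmax_compl (F : 'I_K -> R) :
  \big[Rplus/0]_(j < K) ((1 - e j / E) * F j) =
  \big[Rplus/0]_(r < K) F r - (\big[Rplus/0]_(j < K) (e j * F j)) / E.
Proof. by rewrite /Rdiv -sumR_mulr -sumR_minus; apply: eq_bigr => j _; ring. Qed.

Let curv t := D yy t + \big[Rplus/0]_(j < K) ((1 - e j / E) * D j t).
Let cov t := \big[Rplus/0]_(j < K) (e j * dd j * \big[Rplus/0]_(s < K) (e s * (a j t - a s t))).

Let hess_decomp t :
  D yy t - ((\big[Rplus/0]_(j < K) (e j * a j t * dd j + e j * D j t)) * E
            - (\big[Rplus/0]_(j < K) (e j * a j t)) * Sd) / (E * E)
  + \big[Rplus/0]_(r < K) D r t = curv t - cov t / (E * E).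
Proof.
rewrite /curv /cov big_split /= sum_softmax_compl.
set A := \big[Rplus/0]_(j < K) (e j * a j t).
have -> : \big[Rplus/0]_(j < K) (e j * dd j * \big[Rplus/0]_(s < K) (e s * (a j t - a s t))) =
          (\big[Rplus/0]_(j < K) (e j * a j t * dd j)) * E - A * Sd.
  rewrite (eq_bigr (fun j => e j * a j t * dd j * E - e j * dd j * A)); last first.
    move=> j _; have -> : \big[Rplus/0]_(s < K) (e s * (a j t - a s t)) = a j t * E - A.
      by rewrite -sumR_mull -sumR_minus; apply: eq_bigr => s _; ring.
    ring.
  by rewrite sumR_minus !sumR_mulr [A * _]Rmult_comm.
(* name the sums so that [field] sees their differently elaborated copies as one atom *)
have := E_gt0; set S := E; set S1 := \big[Rplus/0]_(j < K) (e j * a j t * dd j).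
set S2 := \big[Rplus/0]_(j < K) (e j * D j t); set S3 := \big[Rplus/0]_(r < K) D r t.
set S4 := Sd; move=> HS; field; lra.
Qed.

Let curv_ge0 t : 0 <= curv t.
Proof.
have : 0 <= \big[Rplus/0]_(j < K) ((1 - e j / E) * D j t).
  by apply: sumR_ge0 => j _; apply: Rmult_le_pos.
have := HD yy t; rewrite /curv; lra.
Qed.

Let sum_curv_le :
  \big[Rplus/0]_(t : J) (w t * curv t) <= M * (dd yy + \big[Rplus/0]_(r < K) dd r - Sd / E).
Proof.
have -> : \big[Rplus/0]_(t : J) (w t * curv t) = \big[Rplus/0]_(t : J) (w t * D yy t) +
    \big[Rplus/0]_(j < K) ((1 - e j / E) * \big[Rplus/0]_(t : J) (w t * D j t)).
  rewrite (eq_bigr (fun j => \big[Rplus/0]_(t : J) ((1 - e j / E) * (w t * D j t))));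
    last by move=> j _; rewrite sumR_mull.
  rewrite exchange_big -big_split /=; apply: eq_bigr => t _.
  rewrite /curv Rmult_plus_distr_l -sumR_mull; congr (_ + _).
  by apply: eq_bigr => j _; rewrite -!Rmult_assoc (Rmult_comm (w t)).
have -> : dd yy + \big[Rplus/0]_(r < K) dd r - Sd / E =
          dd yy + \big[Rplus/0]_(j < K) ((1 - e j / E) * dd j).
  by rewrite sum_softmax_compl /Rminus Rplus_assoc.
rewrite Rmult_plus_distr_l -sumR_mull; apply: Rplus_le_compat; first exact: HM.
apply: sumR_le => j _; have := HM j; have := softmax_compl_ge0 j; nra.
Qed.

Let sum_abs_diff_le j s :
  \big[Rplus/0]_(t : J) (w t * Rabs (a j t - a s t)) <= (if s == j then 0 else 2 * C).
Proof.
case: eqP => [->|_].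
  by rewrite big1; [lra | move=> t _; rewrite Rminus_diag Rabs_R0 Rmult_0_r].
apply: Rle_trans (_ : \big[Rplus/0]_(t : J) (w t * a j t + w t * a s t) <= _).
  apply: sumR_le => t _; rewrite -Rmult_plus_distr_l; apply: Rmult_le_compat_l => //.
  by have := Ha j t; have := Ha s t; split_Rabs; lra.
by rewrite big_split /=; have := HC j; have := HC s; lra.
Qed.

Let abs_cov_le t : Rabs (cov t) <=
  \big[Rplus/0]_(j < K) \big[Rplus/0]_(s < K) (e j * dd j * e s * Rabs (a j t - a s t)).
Proof.
apply: Rle_trans (sumR_abs _ _ _ _) _; apply: sumR_le => j _.
have ejd : 0 <= e j * dd j by have := He j; have := Hdd j; nra.
rewrite Rabs_mult (Rabs_pos_eq _ ejd).
apply: Rle_trans (Rmult_le_compat_l _ _ _ ejd (sumR_abs _ _ _ _)) _.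
rewrite -sumR_mull; apply: Req_le; apply: eq_bigr => s _.
by rewrite Rabs_mult (Rabs_pos_eq (e s)); [ring | apply: Rlt_le].
Qed.

Let sum_abs_cov_le :
  \big[Rplus/0]_(t : J) (w t * Rabs (cov t)) <= 2 * C * E * (E * \big[Rplus/0]_(r < K) dd r - Sd).
Proof.
apply: Rle_trans (_ : \big[Rplus/0]_(t : J) (w t * \big[Rplus/0]_(j < K) \big[Rplus/0]_(s < K)
    (e j * dd j * e s * Rabs (a j t - a s t))) <= _).
  by apply: sumR_le => t _; apply: Rmult_le_compat_l (Hw t) (abs_cov_le t).
have -> : \big[Rplus/0]_(t : J) (w t * \big[Rplus/0]_(j < K) \big[Rplus/0]_(s < K)
    (e j * dd j * e s * Rabs (a j t - a s t))) = \big[Rplus/0]_(j < K) \big[Rplus/0]_(s < K)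
    (e j * dd j * e s * \big[Rplus/0]_(t : J) (w t * Rabs (a j t - a s t))).
  transitivity (\big[Rplus/0]_(t : J) \big[Rplus/0]_(j < K) \big[Rplus/0]_(s < K)
      (e j * dd j * e s * (w t * Rabs (a j t - a s t)))).
    apply: eq_bigr => t _; rewrite -sumR_mull; apply: eq_bigr => j _.
    by rewrite -sumR_mull; apply: eq_bigr => s _; ring.
  rewrite exchange_big; apply: eq_bigr => j _; rewrite exchange_big.
  by apply: eq_bigr => s _; rewrite sumR_mull.
apply: Rle_trans (_ : \big[Rplus/0]_(j < K) (E * dd j * (2 * C * (E - e j))) <= _); last first.
  apply: Req_le; rewrite (eq_bigr (fun j => 2 * C * E * (E * dd j - e j * dd j))).
    by rewrite sumR_mull sumR_minus sumR_mull.
  by move=> j _; ring.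
apply: sumR_le => j _.
have eE : e j <= E by apply: sumR_ge_term => i; apply: Rlt_le.
apply: Rle_trans (_ : e j * dd j * (2 * C * (E - e j)) <= _); last first.
  apply: Rmult_le_compat_r; first by apply: Rmult_le_pos; lra.
  exact: Rmult_le_compat_r (Hdd j) eE.
have -> : E - e j = \big[Rplus/0]_(s < K) (if s == j then 0 else e s).
  rewrite [in RHS](bigD1 j) //= eqxx Rplus_0_l (bigD1 j) //= Rplus_minus_l.
  by apply: eq_bigr => s /negbTE ->.
rewrite -!sumR_mull; apply: sumR_le => s _.
have c0 : 0 <= e j * dd j * e s.
  by apply: Rmult_le_pos; [apply: Rmult_le_pos|]; [apply: Rlt_le | |apply: Rlt_le].
apply: Rle_trans (Rmult_le_compat_l _ _ _ c0 (sum_abs_diff_le j s)) _.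
by apply: Req_le; case: (s == j); ring.
Qed.

Lemma softmax_hess_le :
  \big[Rplus/0]_(t : J) (w t * Rabs (
     D yy t - ((\big[Rplus/0]_(j < K) (e j * a j t * dd j + e j * D j t)) * E
               - (\big[Rplus/0]_(j < K) (e j * a j t)) * Sd) / (E * E)
     + \big[Rplus/0]_(r < K) D r t))
  <= (2 * C + M) * (dd yy - Sd / E + \big[Rplus/0]_(r < K) dd r).
Proof.
rewrite (eq_bigr (fun t => w t * Rabs (curv t - cov t / (E * E))));
  last by move=> t _; rewrite hess_decomp.
have EE : 0 < / (E * E) by apply: Rinv_0_lt_compat; nra.
apply: Rle_trans (_ : \big[Rplus/0]_(t : J) (w t * curv t + w t * Rabs (cov t) * / (E * E)) <= _).
  apply: sumR_le => t _; rewrite Rmult_assoc -Rmult_plus_distr_l.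
  apply: Rmult_le_compat_l => //; apply: Rle_trans (Rabs_triang _ _) _.
  rewrite Rabs_Ropp (Rabs_pos_eq _ (curv_ge0 t)) /Rdiv Rabs_mult (Rabs_pos_eq (/ (E * E))); lra.
rewrite big_split /= sumR_mulr.
have cov_part : \big[Rplus/0]_(t : J) (w t * Rabs (cov t)) * / (E * E)
                <= 2 * C * (\big[Rplus/0]_(r < K) dd r - Sd / E).
  apply: Rle_trans (Rmult_le_compat_r _ _ _ (Rlt_le _ _ EE) sum_abs_cov_le) _.
  by apply: Req_le; field; lra.
apply: Rle_trans (Rplus_le_compat _ _ _ _ sum_curv_le cov_part) _.
set S := \big[Rplus/0]_(r < K) dd r; set S1 := Sd; set S2 := E.
have := Rmult_le_pos _ _ C0 (Hdd yy); lra.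
Qed.

End SoftmaxHessian.

Lemma Rpower_gt0 x a : 0 < Rpower x a.
Proof. exact: exp_pos. Qed.

Lemma Rpower_sub1 {x} a : 0 < x -> Rpower x (a - 1) = Rpower x a / x.
Proof. by move=> x0; rewrite /Rminus Rpower_plus Rpower_Ropp Rpower_1. Qed.

Lemma conj_exp_gt1 {pp} : 1 < pp -> 0 < conj_exp pp - 1.
Proof.
move=> h; have -> : conj_exp pp - 1 = / (pp - 1) by rewrite /conj_exp; field; lra.
by apply: Rinv_0_lt_compat; lra.
Qed.

Lemma conj_exp_div {pp} : 1 < pp -> conj_exp pp / pp = conj_exp pp - 1.
Proof. by move=> h; rewrite /conj_exp; field; lra. Qed.

(* For positive [g], the [i0]-entry of [r psi_{p'}(g) / ||psi_{p'}(g)||_p] with [p' = conj_exp pp]. *)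
Definition duality_map {I : finType} (r pp : R) (g : I -> R) (i0 : I) : R :=
  r * Rpower (g i0) (conj_exp pp - 1) /
  Rpower (\big[Rplus/0]_(i : I) Rpower (g i) (conj_exp pp)) (/ pp).

Definition duality_map_deriv {I : finType} (r pp : R) (g gp : I -> R) (i0 : I) : R :=
  (conj_exp pp - 1) * duality_map r pp g i0 *
  (gp i0 / g i0 - (\big[Rplus/0]_(i : I) (Rpower (g i) (conj_exp pp - 1) * gp i))
                  / \big[Rplus/0]_(i : I) Rpower (g i) (conj_exp pp)).

Lemma duality_map_gt0 (I : finType) r pp (g : I -> R) i0 : 0 < r -> 0 < duality_map r pp g i0.
Proof.
move=> r0; rewrite /duality_map /Rdiv; apply: Rmult_lt_0_compat; last first.
  by apply: Rinv_0_lt_compat; apply: Rpower_gt0.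
by apply: Rmult_lt_0_compat => //; apply: Rpower_gt0.
Qed.

Lemma derivable_pt_lim_duality_map {I : finType} (G : I -> R -> R) (gp : I -> R) r pp i0 :
  1 < pp -> (forall i, derivable_pt_lim (G i) 0 (gp i)) -> (forall i, 0 < G i 0) ->
  derivable_pt_lim (fun h => duality_map r pp (fun i => G i h) i0) 0
    (duality_map_deriv r pp (fun i => G i 0) gp i0).
Proof.
move=> hpp HG Hpos; set P := conj_exp pp.
have HS : 0 < \big[Rplus/0]_(i : I) Rpower (G i 0) P by apply: (sumR_gt0 i0) => i; apply: Rpower_gt0.
apply: derivable_pt_lim_value; last first.
  apply: derivable_pt_lim_div.
  - by apply: derivable_pt_lim_scale; apply: derivable_pt_lim_Rpower_comp.
  - apply: derivable_pt_lim_Rpower_comp => //.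
    by apply: derivable_pt_lim_sum => i _; apply: derivable_pt_lim_Rpower_comp.
  - by apply: Rgt_not_eq; apply: Rpower_gt0.
rewrite /duality_map_deriv /duality_map -/P.
have -> : \big[Rplus/0]_(i : I) (P * Rpower (G i 0) (P - 1) * gp i) =
          P * \big[Rplus/0]_(i : I) (Rpower (G i 0) (P - 1) * gp i).
  by rewrite -sumR_mull; apply: eq_bigr => i _; ring.
have hG := Hpos i0; rewrite (Rpower_sub1 (P - 1) hG).
set S := \big[Rplus/0]_(i : I) Rpower (G i 0) P in HS *; rewrite (Rpower_sub1 (/ pp) HS).
have hN := Rpower_gt0 S (/ pp).
set S' := \big[Rplus/0]_(i : I) (Rpower (G i 0) (P - 1) * gp i).
have hP : P / pp = P - 1 by apply: conj_exp_div.
rewrite /Rsqr -hP; field; lra.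
Qed.

Section DualityMapDerivBound.
Context {I : finType} (r pp : R) (g : I -> R) (i0 : I).
Hypotheses (Hpp : 1 < pp) (Hr : 0 < r) (Hg : forall i, 0 < g i).

Local Notation P := (conj_exp pp).
Local Notation S := (\big[Rplus/0]_(i : I) Rpower (g i) P).

Let S_gt0 : 0 < S.
Proof. by apply: (sumR_gt0 i0) => i; apply: Rpower_gt0. Qed.

Let q i := Rpower (g i) (P - 1) / S.

Let q_ge0 i : 0 <= q i.
Proof. by apply: Rlt_le; apply: Rdiv_lt_0_compat (Rpower_gt0 _ _) S_gt0. Qed.

Let sum_q_mul_g : \big[Rplus/0]_(i : I) (q i * g i) = 1.
Proof.
rewrite -(Rinv_r S); last exact: Rgt_not_eq _ _ S_gt0.
rewrite -sumR_mulr; apply: eq_bigr => i _.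
by rewrite /q (Rpower_sub1 P (Hg i)); field; split; apply: Rgt_not_eq.
Qed.

Let c := (P - 1) * duality_map r pp g i0.

Let c_ge0 : 0 <= c.
Proof. by apply: Rmult_le_pos; apply: Rlt_le; [apply: conj_exp_gt1 | apply: duality_map_gt0]. Qed.

Let abs_duality_map_deriv_le (gp : I -> R) :
  Rabs (duality_map_deriv r pp g gp i0) <=
  c * (Rabs (gp i0) / g i0 + \big[Rplus/0]_(i : I) (q i * Rabs (gp i))).
Proof.
rewrite /duality_map_deriv Rabs_mult (Rabs_pos_eq _ c_ge0).
apply: (Rmult_le_compat_l _ _ _ c_ge0); apply: Rle_trans (Rabs_triang _ _) _.
rewrite Rabs_Ropp; apply: Rplus_le_compat.
  rewrite /Rdiv Rabs_mult (Rabs_pos_eq (/ g i0)); first lra.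
  by apply: Rlt_le; apply: Rinv_0_lt_compat.
rewrite /Rdiv -sumR_mulr; apply: Rle_trans (sumR_abs _ _ _ _) _.
apply: Req_le; apply: eq_bigr => i _.
have -> : Rpower (g i) (P - 1) * gp i * / S = q i * gp i by rewrite /q /Rdiv; ring.
by rewrite Rabs_mult (Rabs_pos_eq (q i)).
Qed.

Lemma duality_map_deriv_le (J : finType) (gp : I -> J -> R) (w : J -> R) L :
  (forall t, 0 <= w t) ->
  (forall i, \big[Rplus/0]_(t : J) (w t * Rabs (gp i t)) <= L * g i) ->
  \big[Rplus/0]_(t : J) (w t * Rabs (duality_map_deriv r pp g (fun i => gp i t) i0))
    <= 2 * ((P - 1) * L) * duality_map r pp g i0.
Proof.
move=> Hw HL.
apply: Rle_trans (_ : \big[Rplus/0]_(t : J) (c * (w t * Rabs (gp i0 t) / g i0 +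
    \big[Rplus/0]_(i : I) (q i * (w t * Rabs (gp i t))))) <= _).
  apply: sumR_le => t _.
  apply: Rle_trans (Rmult_le_compat_l _ _ _ (Hw t) (abs_duality_map_deriv_le _)) _.
  have -> : \big[Rplus/0]_(i : I) (q i * (w t * Rabs (gp i t))) =
            w t * \big[Rplus/0]_(i : I) (q i * Rabs (gp i t)).
    by rewrite -sumR_mull; apply: eq_bigr => i _; ring.
  by apply: Req_le; set X := \big[Rplus/0]_(i : I) _; rewrite /Rdiv; ring.
have -> : 2 * ((P - 1) * L) * duality_map r pp g i0 = c * (L + L) by rewrite /c; ring.
rewrite sumR_mull; apply: (Rmult_le_compat_l _ _ _ c_ge0); rewrite big_split /=.
apply: Rplus_le_compat.
  rewrite /Rdiv sumR_mulr.
  apply: Rle_trans (Rmult_le_compat_r _ _ _ (Rlt_le _ _ (Rinv_0_lt_compat _ (Hg i0))) (HL i0)) _.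
  by apply: Req_le; field; apply: Rgt_not_eq.
rewrite exchange_big.
apply: Rle_trans (_ : \big[Rplus/0]_(i : I) (L * (q i * g i)) <= _).
  apply: sumR_le => i _; rewrite sumR_mull.
  by apply: Rle_trans (Rmult_le_compat_l _ _ _ (q_ge0 i) (HL i)) _; apply: Req_le; ring.
by rewrite sumR_mull sum_q_mul_g Rmult_1_r; apply: Rle_refl.
Qed.

End DualityMapDerivBound.

Section Objective.
Context {K n1 d n : nat} (f : 'I_K -> ('I_d -> R) -> param K n1 d -> R).
Context (x : 'I_n -> 'I_d -> R) (y : 'I_n -> 'I_K) (eps : R).
Implicit Types (c : coord K n1 d) (p q : param K n1 d).

Lemma derivable_pt_lim_sum_coords p c :
  derivable_pt_lim (fun h => \big[Rplus/0]_(r < K) \big[Rplus/0]_(l < n1) shift p c h (CW r l)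
                     + \big[Rplus/0]_(l < n1) \big[Rplus/0]_(m < d) shift p c h (CU l m)) 0 1.
Proof.
apply: derivable_pt_lim_value; last first.
  by apply: derivable_pt_lim_plus; apply: derivable_pt_lim_sum => r _;
    apply: derivable_pt_lim_sum => l _; apply: derivable_pt_lim_shift.
case: c => [[i0 j0]|[a0 b0]].
  rewrite [X in _ + X]big1 ?Rplus_0_r; last by move=> l _; apply: big1.
  rewrite (bigD1 i0) //= [X in _ + X]big1 ?Rplus_0_r; last first.
    move=> r /negbTE ri0; apply: big1 => l _.
    by rewrite /CW (inj_eq (@inl_inj _ _)) xpair_eqE ri0.
  rewrite (bigD1 j0) //= eqxx big1 ?Rplus_0_r // => l /negbTE lj0.
  by rewrite /CW (inj_eq (@inl_inj _ _)) xpair_eqE eqxx lj0.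
rewrite big1 ?Rplus_0_l; last by move=> r _; apply: big1.
rewrite (bigD1 a0) //= [X in _ + X]big1 ?Rplus_0_r; last first.
  move=> l /negbTE la0; apply: big1 => m _.
  by rewrite /CU (inj_eq (@inr_inj _ _)) xpair_eqE la0.
rewrite (bigD1 b0) //= eqxx big1 ?Rplus_0_r // => m /negbTE mb0.
by rewrite /CU (inj_eq (@inr_inj _ _)) xpair_eqE eqxx mb0.
Qed.

Local Notation E i q := (\big[Rplus/0]_(j < K) exp (f j (x i) q)).

Definition sample_grad i c q : R :=
  pd (f (y i) (x i)) c q
  - (\big[Rplus/0]_(j < K) (exp (f j (x i) q) * pd (f j (x i)) c q)) / E i q
  + \big[Rplus/0]_(r < K) pd (f r (x i)) c q.

Definition grad_Phi c q : R := / INR n * \big[Rplus/0]_(i < n) sample_grad i c q + eps.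

Definition sample_hess i c' c q : R :=
  pd (pd (f (y i) (x i)) c') c q
  - ((\big[Rplus/0]_(j < K) (exp (f j (x i) q) * pd (f j (x i)) c q * pd (f j (x i)) c' q
                             + exp (f j (x i) q) * pd (pd (f j (x i)) c') c q)) * E i q
     - (\big[Rplus/0]_(j < K) (exp (f j (x i) q) * pd (f j (x i)) c q))
       * (\big[Rplus/0]_(j < K) (exp (f j (x i) q) * pd (f j (x i)) c' q)))
    / (E i q * E i q)
  + \big[Rplus/0]_(r < K) pd (pd (f r (x i)) c') c q.

Definition hess_Phi c' c q : R := / INR n * \big[Rplus/0]_(i < n) sample_hess i c' c q.

Hypothesis HK : (0 < K)%N.

Let E_gt0 i q : 0 < E i q.
Proof. by apply: (sumR_gt0 (Ordinal HK)) => j; apply: exp_pos. Qed.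

Lemma derivable_pt_lim_Phi c q : (forall r i, has_pd (f r (x i)) c q) ->
  derivable_pt_lim (fun h => Phi f x y eps (shift q c h)) 0 (grad_Phi c q).
Proof.
move=> Hpd; rewrite /Phi /grad_Phi /CEloss.
apply: derivable_pt_lim_plus; last first.
  apply: (derivable_pt_lim_value _ _ (eps * 1)); first ring.
  apply: derivable_pt_lim_scale.
  exact: derivable_pt_lim_sum_coords.
apply: derivable_pt_lim_scale; apply: derivable_pt_lim_sum => i _.
apply: derivable_pt_lim_plus; last by apply: derivable_pt_lim_sum => r _; apply: pd_spec.
set G := \big[Rplus/0]_(j < K) (exp (f j (x i) q) * pd (f j (x i)) c q).
have hln : derivable_pt_lim (fun h => ln (E i (shift q c h))) 0 (/ E i q * G).
  apply: derivable_pt_lim_value; last first.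
    apply: derivable_pt_lim_ln_comp; last by rewrite shift0.
    by apply: derivable_pt_lim_sum => j _; apply: derivable_pt_lim_exp_comp; apply: pd_spec.
  by rewrite /= shift0; congr (_ * _); apply: eq_bigr => j _; rewrite shift0.
apply: (derivable_pt_lim_value _ _ (- (- pd (f (y i) (x i)) c q + / E i q * G))).
  by rewrite /Rdiv; ring.
apply: derivable_pt_lim_opp; apply: derivable_pt_lim_plus hln.
by apply: derivable_pt_lim_opp; apply: pd_spec.
Qed.

Lemma derivable_pt_lim_grad_Phi c' c p :
  (forall r i, has_pd (f r (x i)) c p) -> (forall r i, has_pd (pd (f r (x i)) c') c p) ->
  derivable_pt_lim (fun h => grad_Phi c' (shift p c h)) 0 (hess_Phi c' c p).
Proof.
move=> H1 H2; rewrite /grad_Phi /hess_Phi.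
apply: (derivable_pt_lim_value _ _ (/ INR n * \big[Rplus/0]_(i < n) sample_hess i c' c p + 0)).
  by rewrite Rplus_0_r.
apply: derivable_pt_lim_plus (derivable_pt_lim_const _ _).
apply: derivable_pt_lim_scale; apply: derivable_pt_lim_sum => i _.
apply: derivable_pt_lim_plus; last by apply: derivable_pt_lim_sum => r _; apply: pd_spec.
apply: derivable_pt_lim_minus; first exact: pd_spec.
apply: derivable_pt_lim_value; last first.
  apply: derivable_pt_lim_div.
  - apply: derivable_pt_lim_sum => j _; apply: derivable_pt_lim_mult; last exact: pd_spec.
    by apply: derivable_pt_lim_exp_comp; apply: pd_spec.
  - by apply: derivable_pt_lim_sum => j _; apply: derivable_pt_lim_exp_comp; apply: pd_spec.
  - by rewrite /= shift0; apply: Rgt_not_eq.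
by rewrite /= !shift0.
Qed.

Hypothesis Hn : (0 < n)%N.
Hypothesis Heps : 0 < eps.

Let invn_gt0 : 0 < / INR n.
Proof. by apply: Rinv_0_lt_compat; apply: lt_0_INR; apply/ltP. Qed.

Lemma sample_grad_ge0 i c q : (forall r, 0 <= pd (f r (x i)) c q) -> 0 <= sample_grad i c q.
Proof.
move=> Hd; rewrite /sample_grad.
have := weighted_avg_le_sum HK (fun j => exp_pos (f j (x i) q)) Hd.
have := Hd (y i); lra.
Qed.

Lemma grad_Phi_ge c q : (forall r i, 0 <= pd (f r (x i)) c q) -> eps <= grad_Phi c q.
Proof.
move=> Hd; rewrite /grad_Phi.
have : 0 <= \big[Rplus/0]_(i < n) sample_grad i c q.
  by apply: sumR_ge0 => i _; apply: sample_grad_ge0.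
have := invn_gt0; nra.
Qed.

Lemma weighted_hess_Phi_le (J : finType) (tau : J -> coord K n1 d) c' p C M :
  0 <= C -> 0 <= M -> (forall t, 0 <= p (tau t)) ->
  (forall r i c, 0 <= pd (f r (x i)) c p) ->
  (forall r i c1 c2, 0 <= pd (pd (f r (x i)) c1) c2 p) ->
  (forall i r, \big[Rplus/0]_(t : J) (p (tau t) * pd (f r (x i)) (tau t) p) <= C) ->
  (forall i r, \big[Rplus/0]_(t : J) (p (tau t) * pd (pd (f r (x i)) c') (tau t) p)
                 <= M * pd (f r (x i)) c' p) ->
  \big[Rplus/0]_(t : J) (p (tau t) * Rabs (hess_Phi c' (tau t) p))
    <= (2 * C + M) * grad_Phi c' p.
Proof.
move=> C0 M0 Hw Hd1 Hd2 B1 B2.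
have Hs i : \big[Rplus/0]_(t : J) (p (tau t) * Rabs (sample_hess i c' (tau t) p))
             <= (2 * C + M) * sample_grad i c' p.
  exact: (@softmax_hess_le K J (fun t => p (tau t)) (fun j => exp (f j (x i) p))
     (fun j => pd (f j (x i)) c' p) (fun j t => pd (f j (x i)) (tau t) p)
     (fun j t => pd (pd (f j (x i)) c') (tau t) p) (y i) C M HK Hw (fun j => exp_pos _)
     (fun j => Hd1 j i c') (fun j t => Hd1 j i (tau t)) (fun j t => Hd2 j i c' (tau t))
     (B1 i) (B2 i) C0).
apply: Rle_trans (_ : / INR n * \big[Rplus/0]_(i < n) ((2 * C + M) * sample_grad i c' p) <= _).
  apply: Rle_trans (_ : \big[Rplus/0]_(t : J) (/ INR n * \big[Rplus/0]_(i < n)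
      (p (tau t) * Rabs (sample_hess i c' (tau t) p))) <= _).
    apply: sumR_le => t _; rewrite /hess_Phi Rabs_mult (Rabs_pos_eq (/ INR n)); last lra.
    rewrite Rmult_comm Rmult_assoc; apply: Rmult_le_compat_l; first lra.
    rewrite Rmult_comm sumR_mull.
    exact: Rmult_le_compat_l (Hw t) (sumR_abs _ _ _ _).
  rewrite sumR_mull exchange_big; apply: Rmult_le_compat_l; first lra.
  by apply: sumR_le => i _; apply: Hs.
rewrite sumR_mull /grad_Phi.
have : 0 <= / INR n * \big[Rplus/0]_(i < n) sample_grad i c' p.
  by apply: Rmult_le_pos; [lra | apply: sumR_ge0 => i _; apply: sample_grad_ge0].
set S := \big[Rplus/0]_(i < n) sample_grad i c' p; nra.
Qed.

End Objective.

Lemma rpow_Rpower x a : 0 < x -> rpow x a = Rpower x a.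
Proof. by rewrite /rpow; case: Rlt_dec. Qed.

Lemma psi_Rpower pp z : 0 < z -> psi pp z = Rpower z (pp - 1).
Proof.
move=> z0; rewrite /psi /sgn Rabs_pos_eq; last lra.
by rewrite rpow_Rpower //; case: Rlt_dec => //= _; ring.
Qed.

Lemma rpow_abs_psi {pp z} : 1 < pp -> 0 < z ->
  rpow (Rabs (psi (conj_exp pp) z)) pp = Rpower z (conj_exp pp).
Proof.
move=> hpp z0; rewrite psi_Rpower // Rabs_pos_eq; last exact: Rlt_le (Rpower_gt0 _ _).
rewrite rpow_Rpower; last exact: Rpower_gt0.
by rewrite Rpower_mult -(conj_exp_div hpp); congr Rpower; field; lra.
Qed.

Section DualityMapOfGradient.
Context {K n1 d : nat} {Ph : param K n1 d -> R} {pw pu rw ru : R} {q : param K n1 d}.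
Hypotheses (Hpw : 1 < pw) (Hpu : 1 < pu) (Hpos : forall c, 0 < pd Ph c q).

Lemma norm_row_psi_grad i (j0 : 'I_n1) : norm_row pw (psi_grad Ph pw q) i =
  Rpower (\big[Rplus/0]_(j < n1) Rpower (pd Ph (CW i j) q) (conj_exp pw)) (/ pw).
Proof.
rewrite /norm_row /psi_grad (eq_bigr _ (fun j _ => rpow_abs_psi Hpw (Hpos _))).
by rewrite rpow_Rpower //; apply: (sumR_gt0 j0) => j; apply: Rpower_gt0.
Qed.

Lemma norm_u_psi_grad (ab0 : 'I_n1 * 'I_d) : norm_u pu (psi_grad Ph pu q) =
  Rpower (\big[Rplus/0]_(ab : 'I_n1 * 'I_d) Rpower (pd Ph (CU ab.1 ab.2) q) (conj_exp pu)) (/ pu).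
Proof.
rewrite /norm_u pair_big /= /psi_grad.
rewrite (eq_bigr _ (fun ab _ => rpow_abs_psi Hpu (Hpos (CU ab.1 ab.2)))).
by rewrite rpow_Rpower //; apply: (sumR_gt0 ab0) => ab; apply: Rpower_gt0.
Qed.

Lemma GPhi_CW i j : GPhi Ph pw pu rw ru (CW i j) q =
  duality_map rw pw (fun j' => pd Ph (CW i j') q) j.
Proof. by rewrite /= (norm_row_psi_grad i j) (psi_Rpower _ _ (Hpos _)). Qed.

Lemma GPhi_CU a b : GPhi Ph pw pu rw ru (CU a b) q =
  duality_map ru pu (fun ab : 'I_n1 * 'I_d => pd Ph (CU ab.1 ab.2) q) (a, b).
Proof. by rewrite /= (norm_u_psi_grad (a, b)) (psi_Rpower _ _ (Hpos _)). Qed.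

End DualityMapOfGradient.

Section GradientDualityMap.
Context {K n1 d n : nat} {f : 'I_K -> ('I_d -> R) -> param K n1 d -> R}.
Context {x : 'I_n -> 'I_d -> R} {y : 'I_n -> 'I_K} {eps pw pu rw ru : R}.
Context {U : param K n1 d -> Prop}.
Hypotheses (HK : (0 < K)%N) (Hn : (0 < n)%N) (Heps : 0 < eps).
Hypotheses (Hpw : 1 < pw) (Hpu : 1 < pu) (Hrw : 0 < rw) (Hru : 0 < ru).
Hypotheses (HUo : is_open U) (HC2 : forall r i, C2_on U (f r (x i))).
Hypothesis Hnn : forall r i p, U p ->
  (forall c, 0 <= pd (f r (x i)) c p) /\ (forall c1 c2, 0 <= pd (pd (f r (x i)) c1) c2 p).
Implicit Types (c : coord K n1 d) (p q : param K n1 d).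

Local Notation Ph := (Phi f x y eps).
Local Notation F := (GPhi Ph pw pu rw ru).

Let has_pd_f p r i c : U p -> has_pd (f r (x i)) c p.
Proof. by move=> Up; case: (HC2 r i p Up) => _ [/(_ c) []]. Qed.

Let has_pd_pd_f p r i c' c : U p -> has_pd (pd (f r (x i)) c') c p.
Proof. by move=> Up; case: (HC2 r i p Up) => _ [_ /(_ c' c) []]. Qed.

Lemma derivable_pt_lim_Phi_on p c : U p ->
  derivable_pt_lim (fun h => Ph (shift p c h)) 0 (grad_Phi f x y eps c p).
Proof. by move=> Up; apply: derivable_pt_lim_Phi => // r i; apply: has_pd_f. Qed.

Lemma pd_Phi p c : U p -> pd Ph c p = grad_Phi f x y eps c p.
Proof. by move=> Up; apply: pd_unique; apply: derivable_pt_lim_Phi_on. Qed.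

Lemma pd_Phi_gt0 p c : U p -> 0 < pd Ph c p.
Proof.
move=> Up; rewrite pd_Phi //; apply: Rlt_le_trans Heps _.
by apply: grad_Phi_ge => // r i; case: (Hnn r i p Up).
Qed.

Lemma derivable_pt_lim_pd_Phi p c' c : U p ->
  derivable_pt_lim (fun h => pd Ph c' (shift p c h)) 0 (hess_Phi f x y c' c p).
Proof.
move=> Up; apply: (pd_local HUo Up (fun q Uq => esym (pd_Phi q c' Uq))).
by apply: derivable_pt_lim_grad_Phi => // r i; [apply: has_pd_f | apply: has_pd_pd_f].
Qed.

Lemma GPhi_CW_on p i j : U p -> F (CW i j) p = duality_map rw pw (fun j' => pd Ph (CW i j') p) j.
Proof. by move=> Up; apply: GPhi_CW => // c; apply: pd_Phi_gt0. Qed.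

Lemma GPhi_CU_on p a b : U p ->
  F (CU a b) p = duality_map ru pu (fun ab : 'I_n1 * 'I_d => pd Ph (CU ab.1 ab.2) p) (a, b).
Proof. by move=> Up; apply: GPhi_CU => // c; apply: pd_Phi_gt0. Qed.

(* [cI] enumerates one block of coordinates: a row [w_i], or all of [u]. *)
Section OneBlock.
Context {I : finType} {cI : I -> coord K n1 d} {r pp : R} {i0 : I} {G : param K n1 d -> R}.
Hypotheses (Hpp : 1 < pp) (Hr : 0 < r).
Hypothesis HG : forall q, U q -> G q = duality_map r pp (fun i => pd Ph (cI i) q) i0.

Lemma derivable_pt_lim_block p c : U p ->
  derivable_pt_lim (fun h => G (shift p c h)) 0
    (duality_map_deriv r pp (fun i => pd Ph (cI i) p) (fun i => hess_Phi f x y (cI i) c p) i0).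
Proof.
move=> Up; apply: (pd_local HUo Up (fun q Uq => esym (HG q Uq))).
apply: derivable_pt_lim_value; last first.
  apply: (derivable_pt_lim_duality_map (fun i h => pd Ph (cI i) (shift p c h))) => // i.
    exact: derivable_pt_lim_pd_Phi.
  by rewrite shift0; apply: pd_Phi_gt0.
by congr duality_map_deriv; apply: functional_extensionality => i; rewrite shift0.
Qed.

Lemma weighted_pd_block_le (J : finType) (tau : J -> coord K n1 d) p C M :
  U p -> (forall t, 0 <= p (tau t)) -> 0 <= C -> 0 <= M ->
  (forall i r', \big[Rplus/0]_(t : J) (p (tau t) * pd (f r' (x i)) (tau t) p) <= C) ->
  (forall i' i r', \big[Rplus/0]_(t : J) (p (tau t) * pd (pd (f r' (x i)) (cI i')) (tau t) p)
                     <= M * pd (f r' (x i)) (cI i') p) ->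
  \big[Rplus/0]_(t : J) (Rabs (pd G (tau t) p) * p (tau t))
    <= 2 * ((conj_exp pp - 1) * (2 * C + M)) * G p.
Proof.
move=> Up Hw C0 M0 B1 B2; rewrite HG //.
rewrite (eq_bigr (fun t => p (tau t) * Rabs (duality_map_deriv r pp (fun i => pd Ph (cI i) p)
                     (fun i => hess_Phi f x y (cI i) (tau t) p) i0))); last first.
  by move=> t _; rewrite Rmult_comm (pd_unique (derivable_pt_lim_block p (tau t) Up)).
apply: duality_map_deriv_le => // [i|i']; first exact: pd_Phi_gt0.
have [Hd1 Hd2] : (forall r' i c, 0 <= pd (f r' (x i)) c p) /\
                 (forall r' i c1 c2, 0 <= pd (pd (f r' (x i)) c1) c2 p).
  by split=> r' i; case: (Hnn r' i p Up).
by rewrite pd_Phi //; apply: weighted_hess_Phi_le.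
Qed.

End OneBlock.

Lemma GPhi_well_defined p : (0 < n1)%N -> (0 < d)%N -> U p ->
  (forall c, has_pd Ph c p) /\
  (forall i : 'I_K, norm_row pw (psi_grad Ph pw p) i <> 0) /\
  norm_u pu (psi_grad Ph pu p) <> 0 /\
  (forall c c', has_pd (F c') c p).
Proof.
move=> Hn1 Hd Up; have Hpos c := pd_Phi_gt0 p c Up.
split; [|split; [|split]].
- by move=> c; eexists; apply: derivable_pt_lim_Phi_on.
- move=> i; rewrite (norm_row_psi_grad Hpw Hpos i (Ordinal Hn1)).
  by apply: Rgt_not_eq; apply: Rpower_gt0.
- rewrite (norm_u_psi_grad Hpu Hpos (Ordinal Hn1, Ordinal Hd)).
  by apply: Rgt_not_eq; apply: Rpower_gt0.
- move=> c [[i j]|[a b]]; eexists.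
  + exact: (derivable_pt_lim_block Hpw (fun q => GPhi_CW_on q i j)).
  + exact: (derivable_pt_lim_block Hpu (fun q => GPhi_CU_on q a b)).
Qed.

Lemma ip_GPhi_le p (Cw Cu Mww Mwu Muw Muu : R) :
  U p -> Vpp p -> 0 < Cw -> 0 < Cu -> 0 < Mww -> 0 < Mwu -> 0 < Muw -> 0 < Muu ->
  (forall i r s, \big[Rplus/0]_(t < n1) (p (CW s t) * pd (f r (x i)) (CW s t) p) <= Cw) ->
  (forall i r, \big[Rplus/0]_(a < n1) \big[Rplus/0]_(b < d)
     (p (CU a b) * pd (f r (x i)) (CU a b) p) <= Cu) ->
  (forall i r s (q : 'I_K) b', \big[Rplus/0]_(t < n1)
     (p (CW s t) * pd (pd (f r (x i)) (CW q b')) (CW s t) p) <= Mww * pd (f r (x i)) (CW q b') p) ->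
  (forall i r (q : 'I_K) b', \big[Rplus/0]_(a < n1) \big[Rplus/0]_(b < d)
     (p (CU a b) * pd (pd (f r (x i)) (CW q b')) (CU a b) p) <= Mwu * pd (f r (x i)) (CW q b') p) ->
  (forall i r s a' b'', \big[Rplus/0]_(t < n1)
     (p (CW s t) * pd (pd (f r (x i)) (CU a' b'')) (CW s t) p) <= Muw * pd (f r (x i)) (CU a' b'') p) ->
  (forall i r a' b'', \big[Rplus/0]_(a < n1) \big[Rplus/0]_(b < d)
     (p (CU a b) * pd (pd (f r (x i)) (CU a' b'')) (CU a b) p) <= Muu * pd (f r (x i)) (CU a' b'') p) ->
  let A := Amat K pw pu Cw Cu Mww Mwu Muw Muu in
  forall (i k : 'I_K) (j a : 'I_n1) (b : 'I_d),
    ip_w (F (CW i j)) k p <= A i k * F (CW i j) p /\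
    ip_u (F (CW i j)) p <= A i K * F (CW i j) p /\
    ip_w (F (CU a b)) k p <= A K k * F (CU a b) p /\
    ip_u (F (CU a b)) p <= A K K * F (CU a b) p.
Proof.
move=> Up Vp Cw0 Cu0 Mww0 Mwu0 Muw0 Muu0 H1 H2 H3 H4 H5 H6 A i k j a b.
have Hw c : 0 <= p c by apply: Rlt_le; apply: Vp.
rewrite /A /Amat /Adiag /Ablk !ltn_ord ltnn /ip_u !pair_big /=.
have CWb := weighted_pd_block_le Hpw Hrw (fun q => GPhi_CW_on q i j).
have CUb := weighted_pd_block_le Hpu Hru (fun q => GPhi_CU_on q a b).
have H2' i' r : \big[Rplus/0]_(ab : 'I_n1 * 'I_d) (p (CU ab.1 ab.2) * pd (f r (x i')) (CU ab.1 ab.2) p)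
               <= Cu by move: (H2 i' r); rewrite pair_big.
split; [|split; [|split]].
- by apply: CWb => //; apply: Rlt_le.
- apply: (CWb _ (fun ab : 'I_n1 * 'I_d => CU ab.1 ab.2)) => //; try apply: Rlt_le => //.
  by move=> j' i' r; move: (H4 i' r i j'); rewrite pair_big.
- by apply: CUb => //; apply: Rlt_le.
- apply: (CUb _ (fun ab : 'I_n1 * 'I_d => CU ab.1 ab.2)) => //; try apply: Rlt_le => //.
  by move=> [a' b''] i' r; move: (H6 i' r a' b''); rewrite pair_big.
Qed.

End GradientDualityMap.

Theorem mainTheorem10
  (K n1 d n : nat) (Hn : (0 < n)%N) (Hn1 : (0 < n1)%N) (Hd : (0 < d)%N)
  (x : 'I_n -> 'I_d -> R) (Hx : forall i l, 0 <= x i l)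
  (y : 'I_n -> 'I_K)
  (pw pu rw ru eps : R)
  (Hpw : 1 < pw) (Hpu : 1 < pu) (Hrw : 0 < rw) (Hru : 0 < ru) (Heps : 0 < eps)
  (f : 'I_K -> ('I_d -> R) -> param K n1 d -> R)
  (* f_r(.)(x^i) is C^2 with nonnegative first and second partials
     on an open neighbourhood U of B_{++} *)
  (HU : exists U : param K n1 d -> Prop,
      is_open U /\ (forall p, Bpp pw pu rw ru p -> U p) /\
      (forall (r : 'I_K) (i : 'I_n), C2_on U (f r (x i))) /\
      (forall (r : 'I_K) (i : 'I_n) p, U p ->
         (forall c, 0 <= pd (f r (x i)) c p) /\
         (forall c1 c2, 0 <= pd (pd (f r (x i)) c1) c2 p)))
  (Cw Cu Mww Mwu Muw Muu : R)
  (HCw : 0 < Cw) (HCu : 0 < Cu) (HMww : 0 < Mww) (HMwu : 0 < Mwu)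
  (HMuw : 0 < Muw) (HMuu : 0 < Muu)
  (H1 : forall (i : 'I_n) (p : param K n1 d) (r s : 'I_K), Bpp pw pu rw ru p ->
     \big[Rplus/0]_(t < n1) (p (CW s t) * pd (f r (x i)) (CW s t) p) <= Cw)
  (H2 : forall (i : 'I_n) (p : param K n1 d) (r : 'I_K), Bpp pw pu rw ru p ->
     \big[Rplus/0]_(a < n1) \big[Rplus/0]_(b < d)
        (p (CU a b) * pd (f r (x i)) (CU a b) p) <= Cu)
  (H3 : forall (i : 'I_n) (p : param K n1 d) (r s q : 'I_K) (b' : 'I_n1),
     Bpp pw pu rw ru p ->
     \big[Rplus/0]_(t < n1)
        (p (CW s t) * pd (pd (f r (x i)) (CW q b')) (CW s t) p)
     <= Mww * pd (f r (x i)) (CW q b') p)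
  (H4 : forall (i : 'I_n) (p : param K n1 d) (r q : 'I_K) (b' : 'I_n1),
     Bpp pw pu rw ru p ->
     \big[Rplus/0]_(a < n1) \big[Rplus/0]_(b < d)
        (p (CU a b) * pd (pd (f r (x i)) (CW q b')) (CU a b) p)
     <= Mwu * pd (f r (x i)) (CW q b') p)
  (H5 : forall (i : 'I_n) (p : param K n1 d) (r s : 'I_K) (a' : 'I_n1) (b'' : 'I_d),
     Bpp pw pu rw ru p ->
     \big[Rplus/0]_(t < n1)
        (p (CW s t) * pd (pd (f r (x i)) (CU a' b'')) (CW s t) p)
     <= Muw * pd (f r (x i)) (CU a' b'') p)
  (H6 : forall (i : 'I_n) (p : param K n1 d) (r : 'I_K) (a' : 'I_n1) (b'' : 'I_d),
     Bpp pw pu rw ru p ->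
     \big[Rplus/0]_(a < n1) \big[Rplus/0]_(b < d)
        (p (CU a b) * pd (pd (f r (x i)) (CU a' b'')) (CU a b) p)
     <= Muu * pd (f r (x i)) (CU a' b'') p) :
  let Ph := Phi f x y eps in
  let F := GPhi Ph pw pu rw ru in
  let A := Amat K pw pu Cw Cu Mww Mwu Muw Muu in
  (* F = G^Phi is well defined on B_{++} *)
  (forall p, Bpp pw pu rw ru p ->
     (forall c, has_pd Ph c p) /\
     (forall i : 'I_K, norm_row pw (psi_grad Ph pw p) i <> 0) /\
     norm_u pu (psi_grad Ph pu p) <> 0 /\
     (forall c c', has_pd (F c') c p)) /\
  (* the bounds with the matrix A (index K = the paper's K+1) *)
  (forall p, Bpp pw pu rw ru p ->
     forall (i k : 'I_K) (j a : 'I_n1) (b : 'I_d),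
       ip_w (F (CW i j)) k p <= A i k * F (CW i j) p /\
       ip_u (F (CW i j)) p <= A i K * F (CW i j) p /\
       ip_w (F (CU a b)) k p <= A K k * F (CU a b) p /\
       ip_u (F (CU a b)) p <= A K K * F (CU a b) p).
Proof.
move=> Ph F A; subst Ph F A.
case: HU => U [HUo [HBU [HC2 Hnn]]].
have HK : (0 < K)%N := leq_ltn_trans (leq0n _) (ltn_ord (y (Ordinal Hn))).
split=> p Bp; have Up := HBU p Bp; first by apply: (GPhi_well_defined (U := U)).
apply: (ip_GPhi_le (U := U)) => //.
- exact: (proj1 Bp).
- by move=> i r s; apply: H1.
- by move=> i r; apply: H2.
- by move=> i r s q b'; apply: H3.
- by move=> i r q b'; apply: H4.
- by move=> i r s a' b''; apply: H5.
- by move=> i r a' b''; apply: H6.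
Qed.
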